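(* Let $b(\lambda)=\frac14\lambda^4+\frac12p\lambda^2+q\lambda$ with $p<0$, $q\in\mathbb{R}$, let $b^*(\eta)=\sup_{\lambda}[\eta\lambda-b(\lambda)]$, and $A(x,r,\eta)=b(x)+b(r)-\eta(x+r)+2b^*(\eta)$. Fix $x$ with $|x|>\sqrt{-p}$ and let $\eta_0=x^3+px+q$ (the unique $\eta$ at which $\lambda\mapsto\eta\lambda-b(\lambda)$ attains its global maximum at $\lambda=x$). Then for all $\eta\in\mathbb{R}$, $$A(x,x,\eta)\approx(\eta-\eta_0)^2(1+|\eta|)^{-2/3},$$ with implied constants independent of $\eta$.
   Context: $X\approx Y$ means $cY\le X\le c^{-1}Y$ for some $c>0$ independent of $\eta$ (it may depend on $x,p,q$). *)

From mathcomp Require Import all_boot all_order all_algebra.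
From mathcomp Require Import all_classical all_reals all_analysis.
Set Implicit Arguments. Unset Strict Implicit. Unset Printing Implicit Defensive.
Import Order.TTheory GRing.Theory Num.Theory.
Local Open Scope classical_set_scope.
Local Open Scope ring_scope.

Definition bfun (R : realType) (p q l : R) : R :=
  l ^+ 4 / 4%:R + p * l ^+ 2 / 2%:R + q * l.

Definition bstar (R : realType) (p q eta : R) : R :=
  sup (range (fun l : R => eta * l - bfun p q l)).

Definition Afun (R : realType) (p q x r eta : R) : R :=
  bfun p q x + bfun p q r - eta * (x + r) + 2%:R * bstar p q eta.

From mathcomp Require Import all_boot all_order all_algebra.
From mathcomp Require Import all_classical all_reals all_analysis.
From mathcomp Require Import ring lra.
Set Implicit Arguments.
Unset Strict Implicit.
Unset Printing Implicit Defensive.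
Import Order.TTheory GRing.Theory Num.Theory.
Local Open Scope ring_scope.

(* Writing l = x + h and d = eta - eta0, the Taylor expansion of b at x gives
   eta l - b(l) = eta x - b(x) + d h - h^2 ((h/2 + x)^2 + m) with
   m = (x^2 + p)/2, and |x| > sqrt(-p) is exactly m > 0.  Hence
   A(x,x,eta) = 2 sup_h [d h - h^2 ((h/2 + x)^2 + m)], and the quartic
   weight is pinched between m/2 h^2 + c h^4 and (2x^2 + m) h^2 + h^4/2.
   With w = (1 + |eta|)^(-2/3), i.e. w^3 (1 + |eta|)^2 = 1, the supremum is
   at least a multiple of d^2 w (take h proportional to d w), and at most
   C d^2 w: if d h - a h^2 - b h^4 > M = C d^2 w, then M, a h^2 and b h^4 are
   all below d h, whence a M < d^2 and b M^3 < d^4; for C large this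
   contradicts 1 + |eta| <= 1 + |eta0| + |d|. *)

(* The increase of l |-> eta l - b(l) from l = x to l = x + h, with
   d = eta - eta0 and m = (x^2 + p)/2; see bfun_gain. *)
Definition gain {R : numFieldType} (x m d h : R) : R :=
  d * h - h ^+ 2 * ((h / 2%:R + x) ^+ 2 + m).

Section QuarticGain.
Variable R : realFieldType.
Implicit Types a b d h m w x E X : R.

Lemma gain_le_quartic x m d h : 0 < m -> m <= 2%:R * x ^+ 2 ->
  gain x m d h <= d * h - (m / 2%:R * h ^+ 2 + m / (16%:R * x ^+ 2) * h ^+ 4).
Proof.
move=> m_gt0 m_le; rewrite /gain lerD2l lerN2.
set u := h / 2%:R + x.
have x2_gt0 : 0 < x ^+ 2 by lra.
have h2_le : h ^+ 2 <= 8%:R * u ^+ 2 + 8%:R * x ^+ 2.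
  have -> : h = 2%:R * u - 2%:R * x by rewrite /u; field.
  have := sqr_ge0 (u + x); nra.
set th := m / (16%:R * x ^+ 2).
have x_neq0 : x != 0 by apply: contraTneq x2_gt0 => ->; rewrite expr0n ltxx.
have th_x2 : th * (8%:R * x ^+ 2) = m / 2%:R by rewrite /th; field.
have th_le : th * 8%:R <= 1.
  have -> : th * 8%:R = m / (2%:R * x ^+ 2) by rewrite /th; field.
  by rewrite ler_pdivrMr ?mul1r; [lra | apply: mulr_gt0].
have : th * h ^+ 2 <= u ^+ 2 + m / 2%:R by have := sqr_ge0 u; nra.
have := sqr_ge0 h; rewrite -[h ^+ 4]/(h ^+ (2 + 2)) exprD; nra.
Qed.

Lemma gain_ge_quartic x m d h :
  d * h - ((2%:R * x ^+ 2 + m) * h ^+ 2 + 2%:R^-1 * h ^+ 4) <= gain x m d h.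
Proof.
rewrite /gain lerD2l lerN2.
have : (h / 2%:R + x) ^+ 2 <= h ^+ 2 / 2%:R + 2%:R * x ^+ 2.
  have := sqr_ge0 (h / 2%:R - x).
  have -> : (h / 2%:R - x) ^+ 2 = h ^+ 2 / 2%:R + 2%:R * x ^+ 2 - (h / 2%:R + x) ^+ 2 by field.
  lra.
have := sqr_ge0 h; rewrite -[h ^+ 4]/(h ^+ (2 + 2)) exprD; nra.
Qed.

Lemma quartic_gain_gt a b M d h : 0 < a -> 0 < b -> 0 <= M ->
  M < d * h - (a * h ^+ 2 + b * h ^+ 4) -> a * M < d ^+ 2 /\ b * M ^+ 3 < d ^+ 4.
Proof.
move=> a_gt0 b_gt0 M_ge0 lt_M.
have ah2_ge0 := mulr_ge0 (ltW a_gt0) (sqr_ge0 h).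
have bh4_ge0 : 0 <= b * h ^+ 4 by rewrite pmulr_rge0 // exprn_even_ge0.
have M_lt : M < d * h by lra.
have ah2_lt : a * h ^+ 2 < d * h by lra.
have bh4_lt : b * h ^+ 4 < d * h by lra.
have h_neq0 : h != 0 by apply/eqP => h0; move: ah2_lt; rewrite h0; lra.
split.
- have h2_gt0 : 0 < h ^+ 2 by rewrite exprn_even_gt0 // h_neq0 orbT.
  rewrite -(ltr_pM2r h2_gt0).
  have -> : a * M * h ^+ 2 = M * (a * h ^+ 2) by ring.
  have -> : d ^+ 2 * h ^+ 2 = d * h * (d * h) by ring.
  exact: ltr_pM.
- have M3_lt : M ^+ 3 < (d * h) ^+ 3 by rewrite ltrXn2r.
  have h4_gt0 : 0 < h ^+ 4 by rewrite exprn_even_gt0 // h_neq0 orbT.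
  rewrite -(ltr_pM2r h4_gt0).
  have -> : b * M ^+ 3 * h ^+ 4 = M ^+ 3 * (b * h ^+ 4) by ring.
  have -> : d ^+ 4 * h ^+ 4 = (d * h) ^+ 3 * (d * h) by ring.
  by apply: ltr_pM; rewrite ?exprn_ge0.
Qed.

Lemma quartic_gain_le a b C E X d h w : 0 < a -> 0 < b -> 0 <= C -> 0 <= X ->
  X <= E + `|d| -> 4%:R * E ^+ 2 <= (a * C) ^+ 3 -> 4%:R <= b * C ^+ 3 ->
  0 <= w -> w ^+ 3 * X ^+ 2 = 1 ->
  d * h - (a * h ^+ 2 + b * h ^+ 4) <= C * d ^+ 2 * w.
Proof.
move=> a_gt0 b_gt0 C_ge0 X_ge0 X_le aC_ge bC_ge w_ge0 wX; rewrite leNgt; apply/negP.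
have M_ge0 := mulr_ge0 (mulr_ge0 C_ge0 (sqr_ge0 d)) w_ge0.
move=> /(quartic_gain_gt a_gt0 b_gt0 M_ge0) [aM_lt bM_lt].
have d2_gt0 : 0 < d ^+ 2.
  by rewrite lt0r sqr_ge0 andbT; apply: contraTneq aM_lt => ->; rewrite mulr0 mul0r mulr0 ltxx.
have aCw_lt1 : a * C * w < 1.
  by rewrite -(ltr_pM2r d2_gt0); move: aM_lt; congr (_ < _); ring.
have bCdw_lt1 : b * C ^+ 3 * d ^+ 2 * w ^+ 3 < 1.
  rewrite -(ltr_pM2r (exprn_gt0 2 d2_gt0)); move: bM_lt; congr (_ < _); ring.
have X2_gt0 : 0 < X ^+ 2.
  rewrite lt0r sqr_ge0 andbT; apply: contra_eq_neq wX => ->.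
  by rewrite mulr0 eq_sym oner_eq0.
have aC_lt : (a * C) ^+ 3 < X ^+ 2.
  have aCw_ge0 := mulr_ge0 (mulr_ge0 (ltW a_gt0) C_ge0) w_ge0.
  have : (a * C * w) ^+ 3 < 1 by rewrite expr_lt1.
  by rewrite -(ltr_pM2r X2_gt0) mul1r exprMn -mulrA wX mulr1.
have bCd_lt : b * C ^+ 3 * d ^+ 2 < X ^+ 2.
  have -> : b * C ^+ 3 * d ^+ 2 = b * C ^+ 3 * d ^+ 2 * w ^+ 3 * X ^+ 2.
    by rewrite -[RHS]mulrA wX mulr1.
  by rewrite -(ltr_pM2r X2_gt0) mul1r in bCdw_lt1.
have d2_norm : `|d| ^+ 2 = d ^+ 2 by rewrite real_normK ?num_real.
case: (leP `|d| E) => [dE | Ed].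
- have X2_le : X ^+ 2 <= 4%:R * E ^+ 2 by have := normr_ge0 d; nra.
  lra.
- have X2_le : X ^+ 2 <= 4%:R * d ^+ 2 by rewrite -d2_norm; nra.
  have : 4%:R * d ^+ 2 <= b * C ^+ 3 * d ^+ 2 by have := sqr_ge0 d; nra.
  lra.
Qed.

Lemma quartic_gain_ge al be E s d w : 0 <= al -> 0 <= be -> 0 <= w -> w <= 1 ->
  d ^+ 2 * w ^+ 3 <= E ^+ 2 -> 0 < s -> s * (1 + 2%:R * (al + be * E ^+ 2)) <= 1 ->
  s / 2%:R * (d ^+ 2 * w) <=
    d * (s * d * w) - (al * (s * d * w) ^+ 2 + be * (s * d * w) ^+ 4).
Proof.
move=> al_ge0 be_ge0 w_ge0 w_le1 dw_le s_gt0 sK.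
have beE_ge0 := mulr_ge0 be_ge0 (sqr_ge0 E).
have s_le1 : s <= 1 by nra.
set D := d ^+ 2 * w.
have D_ge0 : 0 <= D by rewrite mulr_ge0 ?sqr_ge0.
have al_term : al * (s * d * w) ^+ 2 <= al * s ^+ 2 * D.
  have -> : al * (s * d * w) ^+ 2 = al * s ^+ 2 * D * w by rewrite /D; ring.
  by apply: ler_piMr w_le1; rewrite mulr_ge0 // mulr_ge0 // sqr_ge0.
have be_term : be * (s * d * w) ^+ 4 <= be * s ^+ 2 * E ^+ 2 * D.
  have -> : be * (s * d * w) ^+ 4 = be * s ^+ 2 * (s ^+ 2 * (d ^+ 2 * w ^+ 3)) * D.
    by rewrite /D; ring.
  have s2_le1 := exprn_ile1 2 (ltW s_gt0) s_le1.
  have : s ^+ 2 * (d ^+ 2 * w ^+ 3) <= E ^+ 2.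
    by have := mulr_ge0 (sqr_ge0 d) (exprn_ge0 3 w_ge0); nra.
  have := mulr_ge0 (mulr_ge0 be_ge0 (sqr_ge0 s)) D_ge0; nra.
rewrite (_ : d * (s * d * w) = s * D); last by rewrite /D; ring.
have : s ^+ 2 * (al + be * E ^+ 2) <= s / 2%:R by nra.
nra.
Qed.

Lemma le_cube_of_le a K C : 0 < a -> 1 <= C -> K / a <= C -> K <= a * C ^+ 3.
Proof.
move=> a_gt0 C_ge1 KC.
have C_le : C <= C ^+ 3 by have := C_ge1; nra.
by rewrite -ler_pdivrMl //; apply: le_trans C_le; rewrite mulrC.
Qed.

Lemma weight_le1 w X : 0 <= w -> 1 <= X -> w ^+ 3 * X ^+ 2 = 1 -> w <= 1.
Proof.
move=> w_ge0 X_ge1 wX; rewrite leNgt; apply/negP => w_gt1.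
have : 1 < w ^+ 3 by rewrite expr_gt1 // ltW.
have : 1 <= X ^+ 2 by rewrite expr_ge1 // (le_trans ler01).
nra.
Qed.

Lemma weighted_sqr_le E X d w : 0 <= E -> 0 <= w -> `|d| <= E * X ->
  w ^+ 3 * X ^+ 2 = 1 -> d ^+ 2 * w ^+ 3 <= E ^+ 2.
Proof.
move=> E_ge0 w_ge0 d_le wX.
have : d ^+ 2 <= (E * X) ^+ 2.
  by rewrite -real_normK ?num_real // lerXn2r ?nnegrE // (le_trans _ d_le).
move=> d2_le; rewrite -[leRHS]mulr1 -wX.
have := exprn_ge0 3 w_ge0; nra.
Qed.

End QuarticGain.

Lemma gain_le_weighted (R : realFieldType) (x m eta0 : R) :
  0 < m -> m <= 2%:R * x ^+ 2 -> exists2 C, 0 < C &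
  forall eta w, 0 <= w -> w ^+ 3 * (1 + `|eta|) ^+ 2 = 1 ->
  forall h, gain x m (eta - eta0) h <= C * (eta - eta0) ^+ 2 * w.
Proof.
move=> m_gt0 m_le; have x2_gt0 : 0 < x ^+ 2 by lra.
set a := m / 2%:R; set b := m / (16%:R * x ^+ 2); set E := 1 + `|eta0|.
have a_gt0 : 0 < a by rewrite divr_gt0.
have b_gt0 : 0 < b by rewrite divr_gt0 // mulr_gt0.
set C := 1 + 4%:R * E ^+ 2 / a ^+ 3 + 4%:R / b.
have t1 : 0 <= 4%:R * E ^+ 2 / a ^+ 3.
  by apply: divr_ge0; [apply: mulr_ge0 => //; exact: sqr_ge0 | exact/exprn_ge0/ltW].
have t2 : 0 <= 4%:R / b by rewrite divr_ge0 // ltW.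
have C_ge1 : 1 <= C by rewrite /C; lra.
have aC_ge : 4%:R * E ^+ 2 <= (a * C) ^+ 3.
  by rewrite exprMn; apply: (le_cube_of_le (exprn_gt0 3 a_gt0) C_ge1); rewrite /C; lra.
have bC_ge : 4%:R <= b * C ^+ 3.
  by apply: (le_cube_of_le b_gt0 C_ge1); rewrite /C; lra.
exists C => [|eta w w_ge0 wX h]; first exact: lt_le_trans ltr01 C_ge1.
apply: le_trans (gain_le_quartic _ _ m_gt0 m_le) _.
apply: (quartic_gain_le _ a_gt0 b_gt0 _ _ _ aC_ge bC_ge w_ge0 wX).
- exact: le_trans ler01 C_ge1.
- by have := normr_ge0 eta; lra.
- by have := ler_normD (eta - eta0) eta0; rewrite subrK /E; lra.
Qed.

Lemma gain_ge_weighted (R : realFieldType) (x m eta0 : R) : 0 <= m ->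
  exists2 c, 0 < c & forall eta w, 0 <= w -> w ^+ 3 * (1 + `|eta|) ^+ 2 = 1 ->
  exists h, c * (eta - eta0) ^+ 2 * w <= gain x m (eta - eta0) h.
Proof.
move=> m_ge0; set al := 2%:R * x ^+ 2 + m; set E := 1 + `|eta0|.
have al_ge0 : 0 <= al by have := sqr_ge0 x; rewrite /al; lra.
have E_ge0 : 0 <= E by have := normr_ge0 eta0; rewrite /E; lra.
set K := 1 + 2%:R * (al + 2%:R^-1 * E ^+ 2).
have K_gt0 : 0 < K by have := sqr_ge0 E; rewrite /K; lra.
have s_gt0 : 0 < K^-1 by rewrite invr_gt0.
exists (K^-1 / 2%:R) => [|eta w w_ge0 wX]; first by rewrite divr_gt0.
have X_ge1 : 1 <= 1 + `|eta| by have := normr_ge0 eta; lra.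
have d_le : `|eta - eta0| <= E * (1 + `|eta|).
  by have := ler_normB eta eta0; have := normr_ge0 eta; have := normr_ge0 eta0; rewrite /E; nra.
exists (K^-1 * (eta - eta0) * w); rewrite -mulrA.
apply: le_trans (gain_ge_quartic _ _ _ _).
apply: (quartic_gain_ge al_ge0 _ w_ge0 (weight_le1 w_ge0 X_ge1 wX)
  (weighted_sqr_le E_ge0 w_ge0 d_le wX) s_gt0).
- by rewrite invr_ge0.
- by rewrite mulVf ?gt_eqF.
Qed.

Lemma bfun_gain (R : realType) (p q x eta l : R) :
  eta * l - bfun p q l = eta * x - bfun p q x +
    gain x ((x ^+ 2 + p) / 2%:R) (eta - (x ^+ 3 + p * x + q)) (l - x).
Proof. by rewrite /bfun /gain; field. Qed.

Section LegendreGain.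
Variables (R : realType) (p q x eta U : R).
Let m := (x ^+ 2 + p) / 2%:R.
Let d := eta - (x ^+ 3 + p * x + q).
Hypothesis gain_le : forall h, gain x m d h <= U.

Lemma bstar_le_gain : bstar p q eta <= eta * x - bfun p q x + U.
Proof.
apply: ge_sup; first by exists (eta * 0 - bfun p q 0), 0.
by move=> _ [l _ <-]; rewrite (bfun_gain p q x) lerD2l.
Qed.

Lemma gain_le_bstar h : eta * x - bfun p q x + gain x m d h <= bstar p q eta.
Proof.
apply: ub_le_sup; last by exists (x + h) => //; rewrite (bfun_gain p q x _ (x + h)) (addrC x h) addrK.
by exists (eta * x - bfun p q x + U) => _ [l _ <-]; rewrite (bfun_gain p q x) lerD2l.
Qed.

End LegendreGain.

Lemma two_sided_bound (T : Type) (R : realFieldType) (f g : T -> R) (c C : R) :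
  0 < c -> 0 < C -> (forall t, 0 <= g t) ->
  (forall t, c * g t <= f t) -> (forall t, f t <= C * g t) ->
  exists k, 0 < k /\ forall t, k * g t <= f t /\ f t <= k^-1 * g t.
Proof.
move=> c_gt0 C_gt0 g_ge0 f_ge f_le.
have k_gt0 : 0 < Num.min c C^-1 by rewrite lt_min c_gt0 invr_gt0.
exists (Num.min c C^-1); split=> // t; split.
- by apply: le_trans (f_ge t); rewrite ler_wpM2r // ge_min lexx.
- apply: le_trans (f_le t) _; rewrite ler_wpM2r //.
  by rewrite -[leLHS]invrK lef_pV2 ?posrE ?invr_gt0 // ge_min lexx orbT.
Qed.

Lemma powR_weight (R : realType) (A : R) : 0 < A ->
  (A `^ (- (2%:R / 3%:R))) ^+ 3 * A ^+ 2 = 1.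
Proof.
move=> A_gt0.
rewrite -powR_mulrn ?powR_ge0 // -powRrM.
have -> : - (2%:R / 3%:R) * 3%:R = - (2%:R : R) by field.
by rewrite powR_invn ?ltW // mulVf // expf_neq0 // gt_eqF.
Qed.

Lemma Afun_diag (R : realType) (p q x eta : R) :
  Afun p q x x eta = 2%:R * (bstar p q eta - (eta * x - bfun p q x)).
Proof. by rewrite /Afun; ring. Qed.

Theorem corollary6p2 (R : realType) (p q x : R) (hp : p < 0)
    (hx : Num.sqrt (- p) < `|x|) :
  let eta0 := x ^+ 3 + p * x + q in
  exists c : R, 0 < c /\
    forall eta : R,
      c * ((eta - eta0) ^+ 2 * (1 + `|eta|) `^ (- (2%:R / 3%:R))) <= Afun p q x x eta /\
      Afun p q x x eta <= c^-1 * ((eta - eta0) ^+ 2 * (1 + `|eta|) `^ (- (2%:R / 3%:R))).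
Proof.
move=> eta0; set m := (x ^+ 2 + p) / 2%:R.
have x2_gt : - p < x ^+ 2.
  by rewrite -ltr_sqrt ?sqrtr_sqr // exprn_even_gt0 //= -normr_gt0 (le_lt_trans _ hx).
have m_gt0 : 0 < m by rewrite divr_gt0 //; lra.
have m_le : m <= 2%:R * x ^+ 2 by rewrite /m; lra.
have [C C_gt0 gain_le] := gain_le_weighted eta0 m_gt0 m_le.
have [c c_gt0 gain_ge] := gain_ge_weighted x eta0 (ltW m_gt0).
have X_gt0 (eta : R) : 0 < 1 + `|eta| by have := normr_ge0 eta; lra.
have gain_le_w (eta : R) := gain_le eta _ (powR_ge0 _ _) (powR_weight (X_gt0 eta)).
apply: (two_sided_bound (c := 2%:R * c) (C := 2%:R * C)) => [||eta|eta|eta].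
- by rewrite mulr_gt0.
- by rewrite mulr_gt0.
- by rewrite mulr_ge0 ?sqr_ge0 ?powR_ge0.
- have [h gain_h] := gain_ge eta _ (powR_ge0 _ _) (powR_weight (X_gt0 eta)).
  rewrite Afun_diag -mulrA ler_pM2l // lerBrDl mulrA.
  by apply: le_trans (gain_le_bstar (gain_le_w eta) h); rewrite lerD2l.
- rewrite Afun_diag -mulrA ler_pM2l // lerBlDl mulrA.
  exact: bstar_le_gain (gain_le_w eta).
Qed.
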